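(* Let $\mathcal{S}$ be an addable abstract numeration system and let $X\subseteq\mathbb{N}^{\mathbb{N}}$ be a subshift (over a finite subset of $\mathbb{N}$ containing $0$) that is weakly $\mathcal{S}$-codable (resp. $\mathcal{S}$-codable). Let $Y\subseteq B^{\mathbb{N}}$ be a subshift over a finite alphabet $B$, let $\phi\colon Y\to X$ be a conjugacy, and let $b\in B$ with $b^\omega\in Y$ and $\phi(b^\omega)=0^\omega$. Then $Y$ is weakly $\mathcal{S}$-codable (resp. $\mathcal{S}$-codable) with zero symbol $b$, i.e. $\pi(Y)$ is weakly $\mathcal{S}$-codable (resp. $\mathcal{S}$-codable) for a bijection $\pi\colon B\to\{0,\dots,|B|-1\}$ with $\pi(b)=0$.
   Context: Subshifts are one-sided closed shift-invariant sets; a conjugacy is a shift-commuting homeomorphism (equivalently a bijective sliding block code). ANS: $\mathcal{S}=(L,\prec)$ with $L$ an infinite language and $\prec$ a total order of type $\omega$; $\mathrm{rep}(n)$ is the $n$-th word of $L$; tuples are represented by left-padding with a new symbol $\#$; $Z\subseteq\mathbb{N}^d$ is $\mathcal{S}$-recognizable if $\mathrm{rep}(Z)$ is regular; $\mathcal{S}$ is addable if $\{(x,y,x+y)\}$ is $\mathcal{S}$-recognizable. For $\mathbf{y}\in\mathbb{N}^{\mathbb{N}}$: $\sum\mathbf{y}=\sum_iy_i$; if finite, $\nu(\mathbf{y})$ is the unique nondecreasing $(n_1,\dots,n_d)$ with $y_j=|\{k:n_k=j\}|$. Coding dimension of $Z\subseteq\mathbb{N}^{\mathbb{N}}$: least $d$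 bounding $\sum\mathbf{y}$ on $Z$, if it exists. $Z$ is weakly $\mathcal{S}$-codable if for every $k$, $\{\nu(\mathbf{y}):\mathbf{y}\in Z,\sum\mathbf{y}\le k\}$ is $\mathcal{S}$-recognizable in each dimension; $\mathcal{S}$-codable if moreover the coding dimension is finite. *)

From mathcomp Require Import all_boot.
Set Implicit Arguments. Unset Strict Implicit. Unset Printing Implicit Defensive.

Definition regular (S : finType) (L : seq S -> Prop) : Prop :=
  exists (Q : finType) (q0 : Q) (delta : Q -> S -> Q) (F : pred Q),
    forall w, L w <-> F (foldl delta q0 w).

(* ---------- Abstract numeration systems ----------
   An ANS (L, <) with L an infinite language over a finite alphabet and < a
   total order of type omega is given by its enumeration rep : nat -> seq S,
   rep n = the n-th word of L (an injection; L is its image, < is induced). *)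
Record ANS := { ans_alph : finType;
                rep : nat -> seq ans_alph;
                rep_inj : injective rep }.

(* Representation of a d-tuple: left-pad every component with the new
   symbol # (= None) to the common (maximal) length, read componentwise. *)
Definition rep_tuple (S : ANS) (d : nat) (t : d.-tuple nat)
  : seq {ffun 'I_d -> option (ans_alph S)} :=
  let w i := rep S (tnth t i) in
  let m := \max_(i < d) size (w i) in
  mkseq (fun k => [ffun i => nth None (nseq (m - size (w i)) None ++ map Some (w i)) k]) m.

Definition recognizable (S : ANS) (d : nat) (Z : d.-tuple nat -> Prop) : Prop :=
  regular (fun w => exists t, Z t /\ w = rep_tuple S t).

Definition addable (S : ANS) : Prop :=
  recognizable S (fun t : 3.-tuple nat => nth 0 t 2 = nth 0 t 0 + nth 0 t 1).

Definition agree (A : Type) (n : nat) (x y : nat -> A) := forall i, i < n -> x i = y i.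
Definition shift (A : Type) (x : nat -> A) : nat -> A := fun i => x i.+1.

(* closed in the product topology of discrete A^N *)
Definition closed_set (A : Type) (X : (nat -> A) -> Prop) :=
  forall x, (forall n, exists y, X y /\ agree n x y) -> X x.
Definition subshift (A : Type) (X : (nat -> A) -> Prop) :=
  closed_set X /\ forall x, X x -> X (shift x).

Definition continuous_on (A A' : Type) (X : (nat -> A) -> Prop)
  (f : (nat -> A) -> (nat -> A')) :=
  forall x, X x -> forall n, exists m, forall y, X y -> agree m x y -> agree n (f x) (f y).

Definition conjugacy (A A' : Type) (Y : (nat -> A) -> Prop) (X : (nat -> A') -> Prop)
  (phi : (nat -> A) -> (nat -> A')) :=
  [/\ (forall y, Y y -> X (phi y)),
      (forall y, Y y -> phi (shift y) =1 shift (phi y)),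
      continuous_on Y phi &
      exists psi : (nat -> A') -> (nat -> A),
        [/\ (forall x, X x -> Y (psi x)),
            (forall y, Y y -> psi (phi y) =1 y),
            (forall x, X x -> phi (psi x) =1 x) &
            continuous_on X psi]].

Definition ysum (y : nat -> nat) (s : nat) : Prop :=
  exists N, (forall j, N <= j -> y j = 0) /\ \sum_(j < N) y j = s.

(* nu(y) = t : the unique nondecreasing tuple with y_j = #{k | t_k = j} *)
Definition is_nu (y : nat -> nat) (d : nat) (t : d.-tuple nat) : Prop :=
  sorted leq t /\ forall j, y j = count_mem j t.

Definition weakly_codable (S : ANS) (Z : (nat -> nat) -> Prop) : Prop :=
  forall k d, recognizable S
    (fun t : d.-tuple nat => exists y, [/\ Z y, (exists s, s <= k /\ ysum y s) & is_nu y t]).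

Definition finite_coding_dim (Z : (nat -> nat) -> Prop) : Prop :=
  exists d, forall y, Z y -> exists s, s <= d /\ ysum y s.

Definition codable (S : ANS) (Z : (nat -> nat) -> Prop) : Prop :=
  weakly_codable S Z /\ finite_coding_dim Z.

Definition relabel (B : finType) (pi : B -> 'I_#|B|) (Y : (nat -> B) -> Prop)
  : (nat -> nat) -> Prop :=
  fun x => exists y, Y y /\ forall i, x i = val (pi (y i)).

(* Let psi be the inverse of the conjugacy phi : Y -> X.  By compactness, phi
   and psi are sliding block codes with windows r and s.  Since phi maps b^omega
   to 0^omega, a point y of Y with finitely many letters different from b is
   mapped to a point x = phi y of X whose support and sum are bounded in terms
   of those of y, and conversely through psi; this transfers the finite coding
   dimension.  For weak codability, the coding tuple nu(pi y) is obtained from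
   nu(x) by the rule "the multiplicity of q in nu(pi y) is F applied to the
   multiplicities of q, q+1, ..., q+s in nu(x)", F being the local rule of
   pi o psi.  This relation is first-order definable from addition and from the
   recognizable coding sets of X, and first-order definable sets are
   recognizable when S is addable. *)

From mathcomp Require Import all_boot zify.
From Stdlib Require Import Classical ClassicalEpsilon.
Set Implicit Arguments. Unset Strict Implicit. Unset Printing Implicit Defensive.

Lemma not_and_not (P Q : Prop) : ~ (~ P /\ ~ Q) <-> P \/ Q.
Proof.
split=> [h|[hp|hq] [] //]; apply: NNPP => hn.
by apply: h; split=> [hp|hq]; apply: hn; [left|right].
Qed.

Section RegularLanguages.
Variable T : finType.
Implicit Types (L : seq T -> Prop) (w : seq T).

Lemma regular_ext L L' : (forall w, L w <-> L' w) -> regular L -> regular L'.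
Proof.
move=> E [Q [q0 [d [F H]]]]; exists Q, q0, d, F => w; rewrite -E; exact: H.
Qed.

Lemma regular_true : regular (fun _ : seq T => True).
Proof. by exists unit, tt, (fun _ _ => tt), (fun _ => true). Qed.

Lemma regular_and L1 L2 : regular L1 -> regular L2 -> regular (fun w => L1 w /\ L2 w).
Proof.
move=> [Q1 [q1 [d1 [F1 H1]]]] [Q2 [q2 [d2 [F2 H2]]]].
pose d (q : Q1 * Q2) c := (d1 q.1 c, d2 q.2 c).
exists (Q1 * Q2)%type, (q1, q2), d, (fun q => F1 q.1 && F2 q.2) => w.
have -> : foldl d (q1, q2) w = (foldl d1 q1 w, foldl d2 q2 w).
  by elim: w q1 q2 {H1 H2} => //= c w IH q1 q2; exact: IH.
rewrite H1 H2 /=; split; [by case=> -> ->| by move/andP].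
Qed.

Lemma regular_not L : regular L -> regular (fun w => ~ L w).
Proof.
move=> [Q [q0 [d [F H]]]]; exists Q, q0, d, (fun q => ~~ F q) => w /=.
by rewrite H; split => /negP.
Qed.

Lemma regular_all (I : eqType) (L : I -> seq T -> Prop) (s : seq I) :
  (forall i, regular (L i)) -> regular (fun w => forall i, i \in s -> L i w).
Proof.
move=> hL; elim: s => [|i s IH].
  by apply: regular_ext regular_true => w; split.
apply: regular_ext (regular_and (hL i) IH) => w; split.
  by case=> hi hs j; rewrite inE => /predU1P [->|/hs].
by move=> h; split=> [|j hj]; apply: h; rewrite inE ?eqxx ?hj ?orbT.
Qed.

Lemma regular_head (p : pred T) : regular (fun w => is_true (if w is c :: _ then p c else true)).
Proof.
pose d (q : option bool) c := if q is None then Some (p c) else q.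
exists (option bool), None, d, (fun q => q != Some false) => -[|c w] //=.
suff -> : forall q, foldl d (Some q) w = Some q by case: (p c).
by elim: w => //.
Qed.

Lemma regular_sorted (r : rel T) : regular (sorted r).
Proof.
pose d (q : option (option T)) c :=
  if q is Some o then (if o is Some a then (if r a c then Some (Some c) else None)
                       else Some (Some c)) else None.
have dead w : foldl d None w = None by elim: w.
have run a w : foldl d (Some (Some a)) w = if path r a w then Some (Some (last a w)) else None.
  elim: w a => //= c w IH a; case: (r a c) => //=; exact: dead.
exists (option (option T)), (Some None), d, (fun q => q != None) => -[|c w] //=.
by rewrite run; case: path.
Qed.

(* Inverse image under a letter-to-(optional)-letter map; this covers letter
   renaming (f := Some \o g) as well as deletion of letters. *)
Lemma regular_pmap (T' : finType) (f : T' -> option T) L :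
  regular L -> regular (fun w' : seq T' => L (pmap f w')).
Proof.
move=> [Q [q0 [d [F H]]]].
pose d' q c := if f c is Some x then d q x else q.
exists Q, q0, d', F => w'; rewrite H.
suff -> : forall q, foldl d' q w' = foldl d q (pmap f w') by [].
by elim: w' => //= c w' IH q; rewrite /d'; case: (f c).
Qed.

Lemma regular_map (T' : finType) (f : T' -> T) L :
  regular L -> regular (fun w' : seq T' => L (map f w')).
Proof.
move=> [Q [q0 [d [F H]]]].
exists Q, q0, (fun q c => d q (f c)), F => w'; rewrite H.
by elim: w' q0 {H} => //= c w' IH q; rewrite IH.
Qed.

Lemma regular_proj (T' : finType) (h : T' -> T) (L : seq T' -> Prop) :
  regular L -> regular (fun w => exists u, map h u = w /\ L u).
Proof.
move=> [Q [q0 [d [F H]]]].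
pose step (P : {set Q}) c := [set d q c' | q in P, c' in [pred c' | h c' == c]].
have reach w P q : q \in foldl step P w <->
    exists2 q1, q1 \in P & exists u, map h u = w /\ q = foldl d q1 u.
  elim: w P => [|c w IH] P /=.
    split=> [hq|[q1 hq1 [u [hu ->]]]]; first by exists q => //; exists [::].
    by case: u hu.
  rewrite IH; split.
    case=> q1 /imset2P [q2 c' hq2]; rewrite inE => /eqP hc -> [u [hw ->]].
    by exists q2 => //; exists (c' :: u); rewrite /= hc hw.
  case=> q1 hq1 [[|c' u] [//= [hc hw] ->]].
  exists (d q1 c'); last by exists u.
  by apply/imset2P; exists q1 c' => //; rewrite inE hc.
exists ({set Q}), [set q0], step,
  (fun P : {set Q} => [exists q in P, F q]) => w; split.
  case=> u [hw /H hF]; apply/existsP; exists (foldl d q0 u); rewrite hF andbT.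
  by apply/reach; exists q0; rewrite ?set11 //; exists u.
case/existsP=> q /andP [/reach [q1] /set1P -> [u [hw ->]] hF].
by exists u; split => //; exact/H.
Qed.

Lemma regular_padleft (c : T) L : regular L -> regular (fun w => exists k, L (nseq k c ++ w)).
Proof.
move=> [Q [q0 [d [F H]]]].
have run_nseq k q : foldl d q (nseq k c) = iter k (d^~ c) q.
  by elim: k q => // k IH q; rewrite iterSr -IH.
pose I := [set q | fconnect (d^~ c) q0 q].
pose step (P : {set Q}) c' := [set d q c' | q in P].
have run_set w (P : {set Q}) : foldl step P w = [set foldl d q w | q in P].
  elim: w P => [|c' w IH] P /=; last by rewrite IH -imset_comp.
  by rewrite imset_id.
exists ({set Q}), I, step,
  (fun P : {set Q} => [exists q in P, F q]) => w; rewrite run_set; split.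
  case=> k /H; rewrite foldl_cat run_nseq => hF; apply/existsP.
  exists (foldl d (iter k (d^~ c) q0) w); rewrite hF andbT.
  by apply: imset_f; rewrite inE fconnect_iter.
case/existsP=> _ /andP [/imsetP [q hq ->] hF].
move: hq; rewrite inE => /iter_findex hq.
by exists (findex (d^~ c) q0 q); apply/H; rewrite foldl_cat run_nseq hq.
Qed.

End RegularLanguages.

Section PaddedWords.
Variable T : Type.

Lemma pmap_padded k (u : seq T) : pmap id (nseq k None ++ map Some u) = u.
Proof. by elim: k => [|k IH] //=; elim: u => //= a u ->. Qed.

Lemma padded_shape (v : seq (option T)) :
  sorted implb (map isSome v) <-> exists k u, v = nseq k None ++ map Some u.
Proof.
split.
  elim: v => [|[a|] v IH] /= hs; first by exists 0, [::].
    exists 0, (a :: pmap id v); congr (_ :: _).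
    by elim: v hs {IH} => //= -[b|] v IH //= hs; rewrite -IH.
  by have [k [u ->]] := IH (path_sorted hs); exists k.+1, u.
case=> k [u ->]; elim: k => [|k IH] /=; last by case: (_ ++ _) IH.
by elim: u => //= a u; case: u.
Qed.

End PaddedWords.

(* Letters of encodings of n-tuples: one optional symbol (None = #) per component. *)
Notation letter S n := {ffun 'I_n -> option (ans_alph S)}.

Section Encoding.
Variable S : ANS.
Local Notation A := (ans_alph S).

Definition blank n : letter S n := [ffun _ => None].
Definition nonblank n (c : letter S n) := [exists i, c i != None].
Definition starts_nonblank n (w : seq (letter S n)) :=
  if w is c :: _ then nonblank c else true.

Definition track n (i : 'I_n) (w : seq (letter S n)) := map (fun c : letter S n => c i) w.
Definition word_of n (t : n.-tuple nat) (i : 'I_n) := rep S (tnth t i).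
Definition enc_len n (t : n.-tuple nat) := \max_(i < n) size (word_of t i).

Definition padded (M : nat) (u : seq A) (k : nat) : option A :=
  if k < M - size u then None else nth None (map Some u) (k - (M - size u)).

Lemma rep_tupleE n (t : n.-tuple nat) :
  rep_tuple S t = mkseq (fun k => [ffun i => padded (enc_len t) (word_of t i) k]) (enc_len t).
Proof.
rewrite /rep_tuple; apply: eq_mkseq => k; apply/ffunP => i; rewrite !ffunE.
rewrite nth_cat size_nseq /padded; case: ifP => // h; by rewrite nth_nseq h.
Qed.

Lemma size_rep_tuple n (t : n.-tuple nat) : size (rep_tuple S t) = enc_len t.
Proof. by rewrite rep_tupleE size_mkseq. Qed.

Lemma nth_rep_tuple n (t : n.-tuple nat) k : k < enc_len t ->
  nth (blank n) (rep_tuple S t) k = [ffun i => padded (enc_len t) (word_of t i) k].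
Proof. by move=> h; rewrite rep_tupleE nth_mkseq. Qed.

Lemma size_word_of n (t : n.-tuple nat) i : size (word_of t i) <= enc_len t.
Proof. exact: (@leq_bigmax _ (fun i => size (word_of t i)) i). Qed.

Lemma track_rep_tuple n (t : n.-tuple nat) i :
  track i (rep_tuple S t) = nseq (enc_len t - size (word_of t i)) None ++ map Some (word_of t i).
Proof.
have hl := size_word_of t i.
apply: (@eq_from_nth _ None).
  by rewrite size_map size_rep_tuple size_cat size_nseq size_map subnK.
move=> k; rewrite size_map size_rep_tuple => hk.
rewrite (nth_map (blank n)) ?size_rep_tuple // nth_rep_tuple // ffunE /padded nth_cat size_nseq.
by case: ifP => // h; rewrite nth_nseq h.
Qed.

Lemma rep_tuple_inj n : injective (@rep_tuple S n).
Proof.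
move=> t t' E; apply: eq_from_tnth => i; apply: (@rep_inj S).
have := congr1 (fun w => pmap id (track i w)) E.
by rewrite /= !track_rep_tuple !pmap_padded.
Qed.

Lemma eq_from_tracks n (w w' : seq (letter S n)) : size w = size w' ->
  (forall i, track i w = track i w') -> w = w'.
Proof.
move=> hs E; apply: (@eq_from_nth _ (blank n)) => // k hk.
apply/ffunP => i; have := congr1 (fun s => nth None s k) (E i).
by rewrite /track !(nth_map (blank n)) // -hs.
Qed.

Lemma nonblank_blank n : nonblank (blank n) = false.
Proof. by apply/existsP => -[i]; rewrite ffunE. Qed.

Lemma nonblank_neq n (c : letter S n) : nonblank c -> c != blank n.
Proof. by apply: contraTneq => ->; rewrite nonblank_blank. Qed.

(* Every letter of an encoding is non-blank: the longest component has no padding. *)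
Lemma rep_tuple_nonblank n (t : n.-tuple nat) : all (@nonblank n) (rep_tuple S t).
Proof.
apply/(all_nthP (blank n)) => k; rewrite size_rep_tuple => hk.
case: n t hk => [|n] t hk; first by move: hk; rewrite /enc_len big_ord0.
have [i0 _ Ei0] := @eq_bigmax_cond _ (fun _ => true) (fun i => size (word_of t i))
  ltac:(by rewrite card_ord).
rewrite nth_rep_tuple //; apply/existsP; exists i0; rewrite ffunE /padded.
have E : enc_len t = size (word_of t i0) by rewrite /enc_len Ei0.
rewrite E subnn ltn0 subn0; rewrite E in hk.
by elim: (word_of t i0) k hk => [|a u IH] [|k] //= /IH.
Qed.

Lemma starts_nonblank_rep n (t : n.-tuple nat) : starts_nonblank (rep_tuple S t).
Proof. by have := rep_tuple_nonblank t; case: (rep_tuple S t) => //= c w /andP []. Qed.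

Lemma nseq_blank_cat_inj n k k' (u v : seq (letter S n)) :
  starts_nonblank u -> starts_nonblank v ->
  nseq k (blank n) ++ u = nseq k' (blank n) ++ v -> u = v.
Proof.
have hd (w : seq (letter S n)) : starts_nonblank w -> ohead w != Some (blank n).
  by case: w => //= c w /nonblank_neq; apply: contra => /eqP [->].
move=> /hd hu /hd hv; elim: k k' => [|k IH] [|k'] //=.
- by move=> E; move: hu; rewrite E eqxx.
- by move=> E; move: hv; rewrite -E eqxx.
- by case=> /IH.
Qed.

Definition letter1 (a : A) : letter S 1 := [ffun _ => Some a].

Lemma rep_tuple1 (t : 1.-tuple nat) : rep_tuple S t = map letter1 (rep S (tnth t ord0)).
Proof.
have len1 : enc_len t = size (word_of t ord0) by rewrite /enc_len big_ord1.
apply: eq_from_tracks => [|i]; first by rewrite size_rep_tuple size_map len1.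
rewrite (ord1 i) track_rep_tuple len1 subnn /track -map_comp.
by apply: eq_map => a; rewrite /= ffunE.
Qed.

Definition restrict m n (s : 'I_m -> 'I_n) (c : letter S n) : letter S m := [ffun j => c (s j)].
Definition subtuple m n (s : 'I_m -> 'I_n) (t : n.-tuple nat) : m.-tuple nat :=
  [tuple tnth t (s j) | j < m].

Lemma word_of_subtuple m n (s : 'I_m -> 'I_n) t j : word_of (subtuple s t) j = word_of t (s j).
Proof. by rewrite /word_of tnth_mktuple. Qed.

Lemma enc_len_subtuple m n (s : 'I_m -> 'I_n) t : enc_len (subtuple s t) <= enc_len t.
Proof. by apply/bigmax_leqP => j _; rewrite word_of_subtuple size_word_of. Qed.

Lemma subtuple_cons n a (t : n.-tuple nat) : subtuple (lift ord0) [tuple of a :: t] = t.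
Proof. by apply: eq_from_tnth => j; rewrite tnth_mktuple tnthS. Qed.

Lemma track_restrict m n (s : 'I_m -> 'I_n) j (w : seq (letter S n)) :
  track j (map (restrict s) w) = track (s j) w.
Proof. by rewrite /track -map_comp; apply: eq_map => c; rewrite /= ffunE. Qed.

Lemma map_restrict_rep_tuple m n (s : 'I_m -> 'I_n) (t : n.-tuple nat) :
  map (restrict s) (rep_tuple S t) =
  nseq (enc_len t - enc_len (subtuple s t)) (blank m) ++ rep_tuple S (subtuple s t).
Proof.
have hm := enc_len_subtuple s t.
apply: eq_from_tracks => [|j].
  by rewrite size_map size_cat size_nseq !size_rep_tuple subnK.
rewrite track_restrict {2}/track map_cat map_nseq ffunE -/(track j _) !track_rep_tuple.
rewrite word_of_subtuple catA -nseqD; congr (nseq _ _ ++ _).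
by have := size_word_of (subtuple s t) j; rewrite word_of_subtuple; lia.
Qed.

Definition padded_rep (v : seq (option A)) := exists k a, v = nseq k None ++ map Some (rep S a).

Lemma valid_by_tracks n (w : seq (letter S n)) :
  (exists t, w = rep_tuple S t) <-> (forall i, padded_rep (track i w)) /\ starts_nonblank w.
Proof.
split=> [[t ->]|[htr hst]].
  split; last exact: starts_nonblank_rep.
  by move=> i; rewrite track_rep_tuple; do 2 eexists.
have /fin_all_exists [g hg] : forall i, exists p : nat * nat,
    track i w = nseq p.2 None ++ map Some (rep S p.1).
  by move=> i; have [k [a E]] := htr i; exists (a, k).
pose t := [tuple (g i).1 | i < n].
have hwt i : word_of t i = rep S (g i).1 by rewrite /word_of tnth_mktuple.
have hsz i : size w = (g i).2 + size (rep S (g i).1).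
  by rewrite -(size_map (fun c : letter S n => c i)) -/(track i w) hg size_cat size_nseq size_map.
have hlen : enc_len t = size w.
  apply/eqP; rewrite eqn_leq; apply/andP; split.
    by apply/bigmax_leqP => i _; rewrite hwt (hsz i) leq_addl.
  case E: w hst => [|c w'] //= /existsP [i hi].
  have hk : (g i).2 = 0.
    by move: (hg i); rewrite E /=; case: ((g i).2) => //= k [hh]; rewrite hh in hi.
  by have := hsz i; rewrite E /= hk add0n -hwt => ->; exact: size_word_of.
exists t; apply: eq_from_tracks => [|i]; first by rewrite size_rep_tuple hlen.
by rewrite hg track_rep_tuple hwt hlen (hsz i) addnK.
Qed.

End Encoding.

Section Recognizable.
Variable S : ANS.
Local Notation A := (ans_alph S).

Lemma rec_ext n (P Q : n.-tuple nat -> Prop) :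
  (forall t, P t <-> Q t) -> recognizable S P -> recognizable S Q.
Proof.
move=> E; apply: regular_ext => w; split=> -[t [h ->]]; exists t; split => //; exact/E.
Qed.

Lemma rec_and n (P Q : n.-tuple nat -> Prop) :
  recognizable S P -> recognizable S Q -> recognizable S (fun t => P t /\ Q t).
Proof.
move=> hP hQ; apply: regular_ext (regular_and hP hQ) => w; split.
  by case=> -[t [h1 ->]] [t' [h2 /rep_tuple_inj E]]; exists t; subst; split.
by case=> t [[h1 h2] ->]; split; exists t.
Qed.

(* Existential projection of the first coordinate: guess the first track
   letter by letter, and allow the encoding of the remaining components to be
   preceded by blank letters. *)
Lemma rec_ex n (P : n.+1.-tuple nat -> Prop) : recognizable S P ->
  recognizable S (fun t : n.-tuple nat => exists a, P [tuple of a :: t]).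
Proof.
move=> hP.
have := regular_and (regular_padleft (blank S n) (regular_proj (@restrict S _ _ (lift ord0)) hP))
  (regular_head (@nonblank S n)).
apply: regular_ext => w; split.
  case=> -[k [u [hu [t1 [hP1 Eu]]]]] hw; move: hP1 Eu; case: t1 / tupleP => a t hP1 Eu.
  move: hu; rewrite Eu map_restrict_rep_tuple subtuple_cons => E.
  exists t; split; first by exists a.
  by symmetry; exact: nseq_blank_cat_inj (starts_nonblank_rep S t) hw E.
case=> t [[a hP1] ->]; split; last exact: starts_nonblank_rep.
exists (enc_len S [tuple of a :: t] - enc_len S t), (rep_tuple S [tuple of a :: t]); split.
  by rewrite map_restrict_rep_tuple subtuple_cons.
by exists [tuple of a :: t].
Qed.

Hypothesis addS : addable S.

(* Projecting the addition relation twice shows that all of N is recognizable. *)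
Lemma rec_all1 : recognizable S (fun _ : 1.-tuple nat => True).
Proof.
move: addS => /(@rec_ex 2) /(@rec_ex 1); apply: rec_ext => t; split => // _.
by exists 0, (nth 0 t 0) => /=; rewrite addn0.
Qed.

Lemma regular_rep_language : regular (fun u : seq A => exists a, u = rep S a).
Proof.
have letter1_inj : injective (@letter1 S) by move=> a b /ffunP /(_ ord0); rewrite !ffunE => -[].
apply: regular_ext (regular_map (@letter1 S) rec_all1) => u.
split=> [[t [_ E]]|[a ->]]; last by exists [tuple a]; rewrite rep_tuple1.
by exists (tnth t ord0); apply: (inj_map letter1_inj); rewrite E rep_tuple1.
Qed.

Lemma regular_padded_rep : regular (@padded_rep S).
Proof.
have := regular_and (regular_map isSome (regular_sorted implb))
  (regular_pmap id regular_rep_language).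
apply: regular_ext => v; rewrite padded_shape; split.
  by case=> -[k [u ->]] [a]; rewrite pmap_padded => ->; exists k, a.
by case=> k [a ->]; split; [exists k, (rep S a) | exists a; rewrite pmap_padded].
Qed.

Lemma rec_valid n : recognizable S (fun _ : n.-tuple nat => True).
Proof.
have htrack (i : 'I_n) : regular (fun w : seq (letter S n) => padded_rep (track i w)).
  by apply: regular_ext (regular_map (fun c : letter S n => c i) regular_padded_rep).
have := regular_and (regular_all (enum 'I_n) htrack) (regular_head (@nonblank S n)).
apply: regular_ext => w; split=> [[htr hst]|[t [_ ->]]].
  have [t ->] := proj2 (valid_by_tracks w) (conj (fun i => htr i (mem_enum _ i)) hst).
  by exists t.
have [htr hst] := proj1 (valid_by_tracks (rep_tuple S t)) (ex_intro _ t erefl).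
by split=> // i _.
Qed.

Lemma rec_not n (P : n.-tuple nat -> Prop) :
  recognizable S P -> recognizable S (fun t => ~ P t).
Proof.
move=> hP; apply: regular_ext (regular_and (regular_not hP) (rec_valid n)) => w; split.
  by case=> hn [t [_ Ew]]; exists t; split=> // hp; apply: hn; exists t.
by case=> t [hn ->]; split=> [[t' [hp /rep_tuple_inj E]]|]; [subst | exists t].
Qed.

Lemma rec_or n (P Q : n.-tuple nat -> Prop) :
  recognizable S P -> recognizable S Q -> recognizable S (fun t => P t \/ Q t).
Proof.
move=> hP hQ; apply: rec_ext (rec_not (rec_and (rec_not hP) (rec_not hQ))) => t.
exact: not_and_not.
Qed.

(* Renaming of coordinates: read the encoding of the sub-tuple off the
   selected tracks, deleting the letters that became blank. *)
Lemma rec_rename m n (s : 'I_m -> 'I_n) (R : m.-tuple nat -> Prop) :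
  recognizable S R -> recognizable S (fun t : n.-tuple nat => R (subtuple s t)).
Proof.
move=> hR.
pose keep (c : letter S n) := let c' := restrict s c in if nonblank c' then Some c' else None.
have keep_rep t : pmap keep (rep_tuple S t) = rep_tuple S (subtuple s t).
  have -> : pmap keep (rep_tuple S t) = filter (@nonblank S m) (map (restrict s) (rep_tuple S t)).
    by elim: (rep_tuple S t) => //= c w ->; rewrite /keep; case: ifP.
  rewrite map_restrict_rep_tuple filter_cat filter_nseq nonblank_blank mul0n /=.
  exact/all_filterP/rep_tuple_nonblank.
apply: regular_ext (regular_and (regular_pmap keep hR) (rec_valid n)) => w; split.
  case=> -[t' [hR' E]] [t [_ Ew]]; exists t; split => //.
  by move: E; rewrite Ew keep_rep => /rep_tuple_inj ->.
case=> t [hR' ->]; split; last by exists t.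
by exists (subtuple s t); rewrite keep_rep.
Qed.

Lemma rec_bigunion n (P : nat -> n.-tuple nat -> Prop) D :
  (forall k, recognizable S (P k)) -> recognizable S (fun t => exists2 k, k <= D & P k t).
Proof.
move=> hP; elim: D => [|D IH].
  by apply: rec_ext (hP 0) => t; split=> [h|[k]]; [exists 0|rewrite leqn0 => /eqP ->].
apply: rec_ext (rec_or IH (hP D.+1)) => t; split.
  by case=> [[k hk h]|h]; [exists k => //; exact: leqW|exists D.+1].
by case=> k; rewrite leq_eqVlt ltnS => /orP [/eqP ->|hk] h; [right|left; exists k].
Qed.

End Recognizable.

Section Formulas.
Variable S : ANS.
Hypothesis addS : addable S.

(* First-order formulas over N with recognizable atoms; variables are de Bruijn
   indices, and the atom (R, vs) holds when R holds of the values of vs. *)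
Inductive formula : Type :=
| FTrue
| FAtom (m : nat) (R : m.-tuple nat -> Prop) of recognizable S R & m.-tuple nat
| FNot of formula
| FAnd of formula & formula
| FEx of formula.

Definition env_cons (a : nat) (e : nat -> nat) (i : nat) := if i is j.+1 then e j else a.

Fixpoint sem (f : formula) (e : nat -> nat) : Prop :=
  match f with
  | FTrue => True
  | FAtom m R _ vs => R (map_tuple e vs)
  | FNot f => ~ sem f e
  | FAnd f g => sem f e /\ sem g e
  | FEx f => exists a, sem f (env_cons a e)
  end.

Fixpoint fv_below (n : nat) (f : formula) : bool :=
  match f with
  | FTrue => true
  | FAtom _ _ _ vs => all (fun v => v < n) vs
  | FNot f => fv_below n f
  | FAnd f g => fv_below n f && fv_below n g
  | FEx f => fv_below n.+1 f
  end.

Lemma sem_ext f e e' : e =1 e' -> (sem f e <-> sem f e').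
Proof.
elim: f e e' => [|m R HR vs|f IH|f IHf g IHg|f IH] e e' E /=.
- done.
- rewrite (_ : map_tuple e vs = map_tuple e' vs) //.
  by apply: eq_from_tnth => j; rewrite !tnth_map E.
- by rewrite (IH _ _ E).
- by rewrite (IHf _ _ E) (IHg _ _ E).
- have E' a : env_cons a e =1 env_cons a e' by case.
  by split=> -[a h]; exists a; move: h; rewrite (IH _ _ (E' a)).
Qed.

Lemma rec_formula f n : fv_below n f -> recognizable S (fun t : n.-tuple nat => sem f (nth 0 t)).
Proof.
elim: f n => [|m R HR vs|f IH|f IHf g IHg|f IH] n /=.
- by move=> _; apply: rec_ext (rec_valid addS n).
- move=> /allP hv.
  have hv' j : tnth vs j < n by apply: hv; exact: mem_tnth.
  apply: rec_ext (rec_rename addS (fun j => Ordinal (hv' j)) HR) => t.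
  by rewrite (_ : subtuple _ _ = map_tuple (nth 0 t) vs) //; apply: eq_from_tnth => j;
    rewrite tnth_mktuple tnth_map (tnth_nth 0).
- by move=> /IH /(rec_not addS).
- by move=> /andP [/IHf h1 /IHg h2]; exact (rec_and h1 h2).
- move=> /IH /rec_ex h; apply: rec_ext h => t.
  have E a : nth 0 [tuple of a :: t] =1 env_cons a (nth 0 t) by case.
  by split=> -[a h]; exists a; move: h; rewrite (sem_ext _ (E a)).
Qed.

Definition FFalse := FNot FTrue.
Definition FOr f g := FNot (FAnd (FNot f) (FNot g)).
Definition FAll f := FNot (FEx (FNot f)).
Definition FBigAnd (l : seq formula) := foldr FAnd FTrue l.
Definition FBigOr (l : seq formula) := foldr FOr FFalse l.

Lemma sem_and f g e : sem (FAnd f g) e <-> sem f e /\ sem g e.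
Proof. by []. Qed.

Lemma sem_or f g e : sem (FOr f g) e <-> sem f e \/ sem g e.
Proof. exact: not_and_not. Qed.

Lemma sem_all f e : sem (FAll f) e <-> forall a, sem f (env_cons a e).
Proof.
rewrite /=; split=> [h a|h [a]]; last exact.
by apply: NNPP => hn; apply: h; exists a.
Qed.

Lemma sem_bigand (T : eqType) (g : T -> formula) s e :
  sem (FBigAnd (map g s)) e <-> forall x, x \in s -> sem (g x) e.
Proof.
elim: s => [|x s IH] /=; first by split.
rewrite IH; split; first by move=> [h1 h2] y; rewrite inE => /predU1P [->|/h2].
by move=> h; split=> [|y hy]; apply: h; rewrite inE ?eqxx ?hy ?orbT.
Qed.

Lemma sem_bigor (T : eqType) (g : T -> formula) s e :
  sem (FBigOr (map g s)) e <-> exists2 x, x \in s & sem (g x) e.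
Proof.
elim: s => [|x s IH]; first by split=> [h|[x]//]; exfalso; apply: h.
rewrite [FBigOr _]/= sem_or IH; split.
  by case=> [h|[y hy h]]; [exists x; rewrite ?inE ?eqxx | exists y; rewrite // inE hy orbT].
by case=> y; rewrite inE => /predU1P [->|hy h]; [left|right; exists y].
Qed.

Lemma fv_below_and n f g : fv_below n (FAnd f g) = fv_below n f && fv_below n g.
Proof. by []. Qed.

Lemma fv_below_bigand (T : eqType) (g : T -> formula) s n :
  (forall x, x \in s -> fv_below n (g x)) -> fv_below n (FBigAnd (map g s)).
Proof.
elim: s => //= x s IH h; rewrite h ?inE ?eqxx //= IH // => y hy.
by apply: h; rewrite inE hy orbT.
Qed.

Lemma fv_below_bigor (T : eqType) (g : T -> formula) s n :
  (forall x, x \in s -> fv_below n (g x)) -> fv_below n (FBigOr (map g s)).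
Proof.
elim: s => //= x s IH h; rewrite h ?inE ?eqxx //= IH // => y hy.
by apply: h; rewrite inE hy orbT.
Qed.

Definition FExN k f := iter k FEx f.
Definition env_cat (l : seq nat) (e : nat -> nat) (i : nat) :=
  if i < size l then nth 0 l i else e (i - size l).

Lemma env_cat_nil e : env_cat [::] e =1 e.
Proof. by move=> i; rewrite /env_cat subn0. Qed.

Lemma env_cat_rcons l a e : env_cat (rcons l a) e =1 env_cat l (env_cons a e).
Proof.
move=> i; rewrite /env_cat size_rcons nth_rcons.
case: (ltngtP i (size l)) => hi; first by rewrite ltnS ltnW.
  have -> : i - size l = (i - (size l).+1).+1 by rewrite subnS prednK // subn_gt0.
  by rewrite ltnNge hi.
by rewrite hi ltnSn subnn.
Qed.

Lemma sem_exN k f e : sem (FExN k f) e <-> exists2 l, size l = k & sem f (env_cat l e).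
Proof.
elim: k e => [|k IH] e /=.
  split=> [h|[[|//] _ h]]; last exact/(sem_ext _ (env_cat_nil e)).
  by exists [::] => //; exact/(sem_ext _ (env_cat_nil e)).
split=> [[a /IH [l hl h]]|[l']].
  by exists (rcons l a); [rewrite size_rcons hl | exact/(sem_ext _ (env_cat_rcons l a e))].
case/lastP: l' => [//|l a]; rewrite size_rcons => -[hl] h.
by exists a; apply/IH; exists l => //; exact/(sem_ext _ (env_cat_rcons l a e)).
Qed.

Lemma fv_below_exN k f n : fv_below n (FExN k f) = fv_below (k + n) f.
Proof. by elim: k n => //= k IH n; rewrite IH addnS. Qed.

Fixpoint FCount (a : nat -> formula) (K c : nat) : formula :=
  if K is K'.+1 then
    FOr (if c is c'.+1 then FAnd (a K') (FCount a K' c') else FFalse)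
        (FAnd (FNot (a K')) (FCount a K' c))
  else if c is 0 then FTrue else FFalse.

Lemma sem_count (a : nat -> formula) (p : pred nat) K c e :
  (forall k, k < K -> sem (a k) e <-> p k) ->
  (sem (FCount a K c) e <-> count p (iota 0 K) = c).
Proof.
elim: K c => [|K IH] c ha; first by case: c => //=; split=> // [[]].
have IH' c' := IH c' (fun k hk => ha k (ltnW hk)).
have haK := ha K (ltnSn K).
have nFalse : ~ sem FFalse e by apply.
rewrite [FCount _ _ _]/= sem_or -addn1 iotaD count_cat /= addn0.
case: (boolP (p K)) => hp; split.
- case=> [hX|[nA _]]; last by case: nA; apply/haK.
  by case: c hX => [/nFalse []|c [_ /IH' ->]]; rewrite addn1.
- rewrite addn1; case: c => [//|c] [/IH' h]; left; split=> //; exact/haK.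
- have nA : ~ sem (a K) e by move/haK; apply/negP.
  by rewrite addn0; case=> [|[_ /IH' //]]; case: c => [/nFalse []|c [/nA []]].
- by rewrite addn0 => /IH' h; right; split=> // /haK; apply/negP.
Qed.

Lemma fv_below_count a K c n : (forall k, k < K -> fv_below n (a k)) -> fv_below n (FCount a K c).
Proof.
elim: K c => [|K IH] [|c] h //=; rewrite ?h ?IH // => k hk; apply: h; exact: ltnW.
Qed.

Definition add_rel (t : 3.-tuple nat) := nth 0 t 2 = nth 0 t 0 + nth 0 t 1.
Definition FAdd i j k := FAtom (R := add_rel) addS [tuple i; j; k].

Definition eq_rel (t : 2.-tuple nat) := nth 0 t 0 = nth 0 t 1.
Definition le_rel (t : 2.-tuple nat) := nth 0 t 0 <= nth 0 t 1.
Definition lt_rel (t : 2.-tuple nat) := nth 0 t 0 < nth 0 t 1.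
Definition succ_rel (t : 2.-tuple nat) := nth 0 t 1 = (nth 0 t 0).+1.
Definition shift_rel o (t : 2.-tuple nat) := nth 0 t 1 = nth 0 t 0 + o.

(* x = y iff y = x + a for some a with a + a = a. *)
Lemma rec_eq : recognizable S eq_rel.
Proof.
apply: rec_ext (@rec_formula (FEx (FAnd (FAdd 0 0 0) (FAdd 1 0 2))) 2 erefl) => t /=.
by rewrite /add_rel /eq_rel /=; split=> [[a [h1 h2]]|h]; [lia|exists 0; lia].
Qed.

(* x <= y iff y = x + a for some a. *)
Lemma rec_le : recognizable S le_rel.
Proof.
apply: rec_ext (@rec_formula (FEx (FAdd 1 0 2)) 2 erefl) => t /=.
by rewrite /add_rel /le_rel /=; split=> [[a h]|h]; [lia|exists (nth 0 t 1 - nth 0 t 0); lia].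
Qed.

(* x < y iff y = x + a for some a with a + a <> a. *)
Lemma rec_lt : recognizable S lt_rel.
Proof.
apply: rec_ext (@rec_formula (FEx (FAnd (FNot (FAdd 0 0 0)) (FAdd 1 0 2))) 2 erefl) => t /=.
rewrite /add_rel /lt_rel /=; split=> [[a [h1 h2]]|h]; first lia.
by exists (nth 0 t 1 - nth 0 t 0); split; lia.
Qed.

(* y = x + 1 iff x < y and no z satisfies x < z < y. *)
Lemma rec_succ : recognizable S succ_rel.
Proof.
pose FLt i j := FAtom rec_lt [tuple i; j].
apply: rec_ext (@rec_formula (FAnd (FLt 0 1) (FNot (FEx (FAnd (FLt 1 0) (FLt 0 2))))) 2 erefl).
move=> t /=; rewrite /lt_rel /succ_rel /=; split=> [[h1 h2]|h]; last by split=> [|[a]]; lia.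
apply/eqP; rewrite eqn_leq h1 andbT; apply/negP => h3.
by apply: h2; exists (nth 0 t 0).+1; lia.
Qed.

Lemma rec_shift o : recognizable S (shift_rel o).
Proof.
elim: o => [|o IH].
  by apply: rec_ext rec_eq => t; rewrite /eq_rel /shift_rel addn0; split=> ->.
pose f := FEx (FAnd (FAtom IH [tuple 1; 0]) (FAtom rec_succ [tuple 0; 2])).
apply: rec_ext (@rec_formula f 2 erefl) => t /=; rewrite /shift_rel /succ_rel /=.
by split=> [[a [h1 h2]]|h]; [lia|exists (nth 0 t 0 + o); lia].
Qed.

Fixpoint bounded_seqs K m : seq (seq nat) :=
  if K is K'.+1 then [seq c :: l | c <- iota 0 m.+1, l <- bounded_seqs K' m] else [:: [::]].

Lemma mem_bounded_seqs m l : all (fun c => c <= m) l -> l \in bounded_seqs (size l) m.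
Proof.
elim: l => [|c l IH] // /andP [hc hl].
apply/allpairsP; exists (c, l) => /=; split => //; last exact: IH.
by rewrite -[0 :: iota 1 m]/(iota 0 m.+1) mem_iota.
Qed.

Lemma size_bounded_seqs K m l : l \in bounded_seqs K m -> size l = K.
Proof.
elim: K l => [|K IH] l; first by rewrite inE => /eqP ->.
by case/allpairsP=> -[c l'] [_ /IH h ->] /=; rewrite h.
Qed.

Lemma count_mem_nth (x : nat) (v : seq nat) :
  count_mem x v = count (fun i => nth 0 v i == x) (iota 0 (size v)).
Proof. by rewrite -[in LHS](mkseq_nth 0 v) /mkseq count_map. Qed.

Section SlidingImage.
Variables (m d s : nat) (F : seq nat -> nat) (TX : m.-tuple nat -> Prop).
Hypothesis recTX : recognizable S TX.

Definition window_counts (u : seq nat) q := [seq count_mem (q + o) u | o <- iota 0 s.+1].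

Definition sliding_image (t : d.-tuple nat) := exists u : m.-tuple nat,
  [/\ TX u, sorted leq t & forall q, count_mem q t = F (window_counts u q)].

(* Variables 0..m-1 stand for u and m..m+d-1 for t; under the universal
   quantifier of FRule, variable 0 stands for q. *)
Definition FInTX := FAtom recTX [tuple val i | i < m].
Definition FSorted := FBigAnd (map (fun j => FAtom rec_le [tuple m + j; m + j.+1]) (iota 0 d.-1)).
Definition FCountU o c := FCount (fun i => FAtom (rec_shift o) [tuple 0; i.+1]) m c.
Definition FCountT c := FCount (fun j => FAtom rec_eq [tuple 0; (m + j).+1]) d c.
Definition FRule := FAll (FBigOr (map (fun cs =>
  FAnd (FBigAnd (map (fun o => FCountU o (nth 0 cs o)) (iota 0 s.+1))) (FCountT (F cs)))
  (bounded_seqs s.+1 m))).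
Definition FImage := FExN m (FAnd (FAnd FInTX FSorted) FRule).

Lemma fv_below_FImage : fv_below d FImage.
Proof.
rewrite /FImage fv_below_exN.
have h1 : fv_below (m + d) FInTX.
  by apply/allP => v /mapP [i _ ->]; exact: ltn_addr (ltn_ord i).
have h2 : fv_below (m + d) FSorted.
  by rewrite /FSorted; apply: fv_below_bigand => j; rewrite mem_iota add0n => hj /=; lia.
have h3 : fv_below (m + d) FRule.
  apply: fv_below_bigor => cs _; rewrite fv_below_and; apply/andP; split.
    by apply: fv_below_bigand => o _; apply: fv_below_count => i hi /=; lia.
  by apply: fv_below_count => j hj /=; lia.
by rewrite !fv_below_and h1 h2 h3.
Qed.

Section Environment.
Variables (u : m.-tuple nat) (t : d.-tuple nat) (e : nat -> nat).
Hypotheses (e_u : forall i, i < m -> e i = nth 0 u i) (e_t : forall j, e (m + j) = nth 0 t j).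

Lemma sem_FInTX : sem FInTX e <-> TX u.
Proof.
rewrite /= (_ : map_tuple e _ = u) //; apply: eq_from_tnth => i.
by rewrite tnth_map tnth_mktuple e_u // (tnth_nth 0).
Qed.

Lemma sem_FSorted : sem FSorted e <-> sorted leq t.
Proof.
have sorted_nth (l : seq nat) :
    sorted leq l <-> forall j, j.+1 < size l -> nth 0 l j <= nth 0 l j.+1.
  by case: l => [|x l] //=; split=> [/(pathP 0)|h]; last apply/(pathP 0).
rewrite sorted_nth size_tuple sem_bigand; split=> h j.
  by move=> hj; move: (h j); rewrite mem_iota /= /le_rel /= !e_t; apply; lia.
by rewrite mem_iota /= /le_rel /= !e_t => hj; apply: h; lia.
Qed.

Lemma sem_FCountU q o c : sem (FCountU o c) (env_cons q e) <-> count_mem (q + o) u = c.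
Proof.
rewrite count_mem_nth size_tuple; apply: sem_count => i hi.
by rewrite /= /shift_rel /= e_u //; split=> [->|/eqP].
Qed.

Lemma sem_FCountT q c : sem (FCountT c) (env_cons q e) <-> count_mem q t = c.
Proof.
rewrite count_mem_nth size_tuple; apply: sem_count => j hj.
by rewrite /= /eq_rel /= e_t; split=> [->|/eqP].
Qed.

Lemma sem_FRule : sem FRule e <-> forall q, count_mem q t = F (window_counts u q).
Proof.
rewrite sem_all; split=> h q; move: (h q).
  case/sem_bigor=> cs hcs /sem_and [/sem_bigand hU /sem_FCountT ->]; congr F.
  apply: (@eq_from_nth _ 0); first by rewrite size_map size_iota (size_bounded_seqs hcs).
  move=> o; rewrite (size_bounded_seqs hcs) => ho.
  rewrite (nth_map 0) ?size_iota // nth_iota // add0n.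
  by symmetry; apply/sem_FCountU/hU; rewrite mem_iota.
move=> hq; apply/sem_bigor; exists (window_counts u q).
  have := @mem_bounded_seqs m (window_counts u q); rewrite size_map size_iota; apply.
  by apply/allP => c /mapP [o _ ->]; apply: leq_trans (count_size _ _) _; rewrite size_tuple.
apply/sem_and; split; last exact/sem_FCountT.
apply/sem_bigand => o; rewrite mem_iota add0n => ho; apply/sem_FCountU.
by rewrite (nth_map 0) ?size_iota // nth_iota.
Qed.

End Environment.

Lemma rec_sliding_image : recognizable S sliding_image.
Proof.
apply: rec_ext (rec_formula fv_below_FImage) => t; rewrite sem_exN; split.
  case=> l hl [[hTX hS] hR]; pose u : m.-tuple nat := Tuple (introT eqP hl).
  have e_u i : i < m -> env_cat l (nth 0 t) i = nth 0 u i by rewrite /env_cat hl => ->.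
  have e_t j : env_cat l (nth 0 t) (m + j) = nth 0 t j.
    by rewrite /env_cat hl ltnNge leq_addr /= addKn.
  exists u; split; [exact/(sem_FInTX e_u)|exact/(sem_FSorted e_t)|exact/(sem_FRule e_u e_t)].
case=> u [hTX hS hR]; exists u; first exact: size_tuple.
have e_u i : i < m -> env_cat u (nth 0 t) i = nth 0 u i by rewrite /env_cat size_tuple => ->.
have e_t j : env_cat u (nth 0 t) (m + j) = nth 0 t j.
  by rewrite /env_cat size_tuple ltnNge leq_addr /= addKn.
split; [split; [exact/(sem_FInTX e_u)|exact/(sem_FSorted e_t)]|exact/(sem_FRule e_u e_t)].
Qed.

End SlidingImage.
End Formulas.

Lemma eventually_all (T : eqType) (P : T -> nat -> Prop) (W : seq T) :
  (forall v, v \in W -> exists N, forall k, N <= k -> P v k) ->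
  exists N, forall v, v \in W -> forall k, N <= k -> P v k.
Proof.
elim: W => [|w W IH] h; first by exists 0.
have [N1 h1] := h w (mem_head _ _).
have [N2 h2] := IH (fun v hv => h v (@mem_behead _ (w :: W) v hv)).
exists (maxn N1 N2) => v; rewrite inE => /predU1P [->|hv] k; rewrite geq_max => /andP [hk1 hk2].
  exact: h1.
exact: h2.
Qed.

Section Compactness.
Variables (T : eqType) (Z : (nat -> T) -> Prop) (V : seq T).
Hypotheses (closedZ : closed_set Z) (alphZ : forall x, Z x -> forall i, x i \in V).

(* Every sequence of points of Z has a cluster point in Z (Koenig's lemma):
   extend a prefix letter by letter, keeping infinitely many points that
   agree with it. *)
Lemma cluster_point (xs : nat -> nat -> T) : (forall k, Z (xs k)) ->
  exists2 z, Z z & forall n N, exists2 k, N <= k & agree n (xs k) z.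
Proof.
move=> hxs; pose t0 := xs 0 0.
pose G (p : seq T) := forall N, exists2 k, N <= k & agree (size p) (xs k) (nth t0 p).
have G_rcons p : G p -> exists v, v \in V /\ G (rcons p v).
  move=> hp; apply: NNPP => hne.
  have : forall v, v \in V -> exists N, forall k, N <= k ->
      ~ agree (size (rcons p v)) (xs k) (nth t0 (rcons p v)).
    move=> v hv; apply: NNPP => h1; apply: hne; exists v; split => // N.
    by apply: NNPP => h2; apply: h1; exists N => k hk ha; apply: h2; exists k.
  case/eventually_all=> N hN; have [k hk ha] := hp N.
  apply: (hN (xs k (size p)) (alphZ (hxs k) _) k hk) => i.
  rewrite size_rcons ltnS leq_eqVlt nth_rcons => /predU1P [->|hi]; first by rewrite ltnn eqxx.
  by rewrite hi; exact: ha.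
pose next p := epsilon (inhabits t0) (fun v => v \in V /\ G (rcons p v)).
pose pre k := iter k (fun p => rcons p (next p)) [::].
have hpre k : G (pre k) /\ size (pre k) = k.
  elim: k => [|k [IH hs]]; first by split=> // N; exists N.
  split; last by rewrite /= size_rcons hs.
  by have [] := epsilon_spec (inhabits t0) _ (G_rcons _ IH).
pose z i := nth t0 (pre i.+1) i.
have pre_z k : agree k (nth t0 (pre k)) z.
  elim: k => [|k IH] i //; rewrite ltnS leq_eqVlt => /predU1P [->|hi] //.
  by rewrite [pre k.+1]/= nth_rcons (proj2 (hpre k)) hi; exact: IH.
have near_z n N : exists2 k, N <= k & agree n (xs k) z.
  have [k hk ha] := proj1 (hpre n) N; exists k => // i hi.
  by rewrite -(pre_z n) //; apply: ha; rewrite (proj2 (hpre n)).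
exists z => //; apply: closedZ => n; have [k _ ha] := near_z n 0.
by exists (xs k); split=> // i hi; rewrite ha.
Qed.

Lemma uniform_window (T' : Type) (f : (nat -> T) -> nat -> T') :
  continuous_on Z f -> exists r, forall x y, Z x -> Z y -> agree r x y -> f x 0 = f y 0.
Proof.
move=> contf; apply: NNPP => hn.
have /all_sig [g hg] : forall r, { p | [/\ Z p.1, Z p.2, agree r p.1 p.2 & f p.1 0 <> f p.2 0] }.
  move=> r; apply: constructive_indefinite_description; apply: NNPP => hr.
  apply: hn; exists r => x y hx hy ha; apply: NNPP => hxy; apply: hr.
  by exists (x, y).
have Zg k : Z (g k).1 by case: (hg k).
have [z Zz hz] := cluster_point Zg.
have [r0 hr0] := contf z Zz 1.
have [k hk ha] := hz r0 r0; have [Zx Zy hxy hne] := hg k.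
have hxz : agree r0 z (g k).1 by move=> i hi; rewrite ha.
have hyz : agree r0 z (g k).2 by move=> i hi; rewrite -ha // hxy //; exact: leq_trans hi hk.
by apply: hne; rewrite -(hr0 _ Zx hxz 0) // (hr0 _ Zy hyz 0).
Qed.

End Compactness.

Lemma support_shift (u : nat -> nat) N o : (forall j, N <= j -> u j = 0) ->
  \sum_(j < N) (u (j + o) != 0 : nat) <= \sum_(j < N) (u j != 0 : nat).
Proof.
move=> hN; elim: o => [|o IH]; first by apply: leq_sum => j _; rewrite addn0.
pose g j := (u (j + o) != 0 : nat).
have g0 : g N = 0 by rewrite /g hN ?leq_addr ?eqxx.
have E1 : \sum_(j < N.+1) g j = g 0 + \sum_(j < N) g j.+1 by rewrite big_ord_recl.
have E2 : \sum_(j < N.+1) g j = \sum_(j < N) g j + g N by rewrite big_ord_recr.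
apply: leq_trans IH; rewrite (eq_bigr (fun j : 'I_N => g j.+1)) => [|j _]; last first.
  by rewrite /g addSnnS.
change (\sum_(j < N) g j.+1 <= \sum_(j < N) g j); lia.
Qed.

Lemma support_transfer (u v : nat -> nat) r M N k :
  (forall q, v q != 0 -> exists2 o, o <= r & u (q + o) != 0) ->
  (forall q, v q <= M) -> (forall j, N <= j -> u j = 0) -> \sum_(j < N) u j <= k ->
  (forall j, N <= j -> v j = 0) /\ \sum_(j < N) v j <= M * r.+1 * k.
Proof.
move=> hvu hM hN hk; split.
  move=> j hj; apply/eqP; apply: contraT => /hvu [o _]; rewrite hN ?eqxx //.
  exact: leq_trans hj (leq_addr _ _).
have h1 : \sum_(j < N) v j <= \sum_(j < N) M * \sum_(o < r.+1) (u (j + o) != 0 : nat).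
  apply: leq_sum => j _; case: (eqVneq (v j) 0) => [->//|/hvu [o ho hu]].
  apply: leq_trans (hM j) _; rewrite -{1}(muln1 M) leq_mul2l; apply/orP; right.
  by rewrite (bigD1 (Ordinal (ho : o < r.+1))) //= hu leq_addr.
apply: leq_trans h1 _; rewrite -big_distrr /= -mulnA leq_mul2l; apply/orP; right.
rewrite exchange_big /=; apply: leq_trans (_ : \sum_(o < r.+1) \sum_(j < N) (u j != 0 : nat) <= _).
  by apply: leq_sum => o _; exact: support_shift.
rewrite sum_nat_const card_ord leq_mul2l; apply/orP; right.
by apply: leq_trans hk; apply: leq_sum => j _; case: (u j).
Qed.

Lemma sum_count_mem (t : seq nat) N : (forall x, x \in t -> x < N) ->
  \sum_(j < N) count_mem (j : nat) t = size t.
Proof.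
elim: t => [|x t IH] h /=; first by rewrite big1.
rewrite big_split /= IH => [|y hy]; last by apply: h; rewrite inE hy orbT.
have hx : x < N by apply: h; rewrite inE eqxx.
rewrite (bigD1 (Ordinal hx)) //= eqxx big1 ?addn0 ?add1n // => j hj.
by apply/eqP; rewrite eqb0; apply: contra hj => /eqP h1; apply/eqP; exact: val_inj.
Qed.

Lemma nu_exists (y : nat -> nat) N : (forall j, N <= j -> y j = 0) ->
  exists t : (\sum_(j < N) y j).-tuple nat, is_nu y t.
Proof.
move=> hN; pose g n := flatten [seq nseq (y j) j | j <- iota 0 n].
have gS n : g n.+1 = g n ++ nseq (y n) n.
  by rewrite /g -addn1 iotaD map_cat flatten_cat /= cats0.
have count_g n j : count_mem j (g n) = if j < n then y j else 0.
  elim: n => [|n IH] //; rewrite gS count_cat IH count_nseq ltnS.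
  case: (ltngtP j n) => [h|h|->] /=.
  - by rewrite eq_sym (ltn_eqF h) mul0n addn0.
  - by rewrite (ltn_eqF h) mul0n.
  - by rewrite eqxx mul1n.
have size_g n : size (g n) = \sum_(j < n) y j.
  by elim: n => [|n IH]; rewrite ?big_ord0 // gS size_cat size_nseq IH big_ord_recr.
have hl : size (sort leq (g N)) == \sum_(j < N) y j by rewrite size_sort size_g.
exists (Tuple hl); split; first exact: (sort_sorted leq_total).
move=> j /=; rewrite (permP (permEl (perm_sort leq (g N)))) count_g.
by case: ltnP => // /hN.
Qed.

Lemma leq_foldr_max (t : seq nat) x : x \in t -> x <= foldr maxn 0 t.
Proof.
elim: t => //= y t IH; rewrite inE => /predU1P [->|/IH h]; first exact: leq_maxl.
exact: leq_trans h (leq_maxr _ _).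
Qed.

Lemma ysum_of_nu (y : nat -> nat) d (t : d.-tuple nat) : is_nu y t -> ysum y d.
Proof.
move=> [_ hc]; exists (foldr maxn 0 t).+1; split.
  move=> j hj; rewrite hc; apply/count_memPn; apply/negP => /leq_foldr_max; lia.
rewrite (eq_bigr (fun j : 'I_(foldr maxn 0 t).+1 => count_mem (j : nat) t)) //.
by rewrite sum_count_mem ?size_tuple // => x /leq_foldr_max.
Qed.

Lemma ysum_nu (y : nat -> nat) d (t : d.-tuple nat) s : is_nu y t -> ysum y s -> s = d.
Proof.
move=> [_ hc] [N [hN <-]].
have ht x : x \in t -> x < N.
  by move=> hx; rewrite ltnNge; apply/negP => /hN; rewrite hc => /count_memPn; rewrite hx.
by rewrite (eq_bigr (fun j : 'I_N => count_mem (j : nat) t)) ?sum_count_mem ?size_tuple.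
Qed.

Definition coding_set (Z : (nat -> nat) -> Prop) (k d : nat) (t : d.-tuple nat) :=
  exists y, [/\ Z y, (exists s, s <= k /\ ysum y s) & is_nu y t].

Lemma iter_shift (T : Type) q (x : nat -> T) i : iter q (@shift T) x i = x (q + i).
Proof. by elim: q i => //= q IH i; rewrite /shift IH addSnnS. Qed.

(* Points are functions: continuous maps respect pointwise equality. *)
Lemma continuous_ext (T T' : Type) (Z : (nat -> T) -> Prop) (f : (nat -> T) -> nat -> T')
  x x' :
  continuous_on Z f -> Z x -> Z x' -> x =1 x' -> f x =1 f x'.
Proof.
move=> contf hx hx' E i; have [m hm] := contf x hx i.+1.
by apply: (hm x' hx') => // j _; rewrite E.
Qed.

Section Conjugacy.
Variables (X : (nat -> nat) -> Prop) (B : finType) (Y : (nat -> B) -> Prop) (b : B).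
Variables (phi : (nat -> B) -> nat -> nat) (psi : (nat -> nat) -> nat -> B).
Hypotheses (closedX : closed_set X) (shiftX : forall x, X x -> X (shift x))
  (shiftY : forall y, Y y -> Y (shift y)) (Yb : Y (fun _ => b))
  (phib : phi (fun _ => b) =1 (fun _ => 0)).
Hypotheses (phiY : forall y, Y y -> X (phi y))
  (phi_shift : forall y, Y y -> phi (shift y) =1 shift (phi y))
  (psiX : forall x, X x -> Y (psi x)) (psiK : forall y, Y y -> psi (phi y) =1 y)
  (phiK : forall x, X x -> phi (psi x) =1 x) (contpsi : continuous_on X psi).
Variables (s r : nat).
Hypotheses (psi_window : forall x x', X x -> X x' -> agree s x x' -> psi x 0 = psi x' 0)
  (phi_window : forall y y', Y y -> Y y' -> agree r y y' -> phi y 0 = phi y' 0).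

(* 0^omega lies in X, being pointwise equal to phi b^omega, and psi maps it back
   to b^omega. *)
Lemma X_zero : X (fun _ => 0).
Proof.
apply: closedX => n; exists (phi (fun _ => b)).
by split=> [|i _]; rewrite ?phib //; exact: phiY.
Qed.

Lemma psi_zero_seq : psi (fun _ => 0) =1 (fun _ => b).
Proof.
move=> i; have E : (fun _ => 0) =1 phi (fun _ => b) by move=> j; rewrite phib.
by rewrite (continuous_ext contpsi X_zero (phiY Yb) E) psiK.
Qed.

Lemma iter_shiftX x q : X x -> X (iter q (@shift nat) x).
Proof. by elim: q => //= q IH hx; apply: shiftX; exact: IH. Qed.

Lemma iter_shiftY y q : Y y -> Y (iter q (@shift B) y).
Proof. by elim: q => //= q IH hy; apply: shiftY; exact: IH. Qed.

Lemma psi_shift x : X x -> psi (shift x) =1 shift (psi x).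
Proof.
move=> hx; have hy := psiX hx.
have E : shift x =1 phi (shift (psi x)) by move=> i; rewrite phi_shift // /shift phiK.
move=> i; rewrite (continuous_ext contpsi (shiftX hx) (phiY (shiftY hy)) E) psiK //.
exact: shiftY.
Qed.

Lemma psi_at x q : X x -> psi x q = psi (iter q (@shift nat) x) 0.
Proof.
elim: q x => // q IH x hx; rewrite iterSr -IH; last exact: shiftX.
by rewrite psi_shift.
Qed.

Lemma phi_at y q : Y y -> phi y q = phi (iter q (@shift B) y) 0.
Proof.
elim: q y => // q IH y hy; rewrite iterSr -IH; last exact: shiftY.
by rewrite phi_shift.
Qed.

Lemma psi_local x x' q q' : X x -> X x' ->
  (forall o, o < s -> x (q + o) = x' (q' + o)) -> psi x q = psi x' q'.
Proof.
move=> hx hx' h; rewrite (psi_at q hx) (psi_at q' hx').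
by apply: psi_window; try exact: iter_shiftX; move=> o ho; rewrite !iter_shift h.
Qed.

Lemma psi_zero x q : X x -> (forall o, o < s -> x (q + o) = 0) -> psi x q = b.
Proof. by move=> hx h; rewrite (@psi_local x (fun _ => 0) q 0 hx X_zero) ?psi_zero_seq. Qed.

Lemma phi_zero y q : Y y -> (forall o, o < r -> y (q + o) = b) -> phi y q = 0.
Proof.
move=> hy h; rewrite (phi_at q hy) (@phi_window _ (fun _ => b)) ?phib //; first exact: iter_shiftY.
by move=> o ho; rewrite iter_shift h.
Qed.

Variable pi : B -> 'I_#|B|.
Hypotheses (pi_inj : injective pi) (pi_b : val (pi b) = 0).

Lemma pi_eq0 c : (val (pi c) == 0) = (c == b).
Proof. by apply/eqP/eqP => [h|->//]; apply: pi_inj; apply: val_inj; rewrite /= h. Qed.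

Definition local_rule (w : seq nat) : nat :=
  val (pi (psi (epsilon (inhabits (fun _ : nat => 0))
    (fun x => X x /\ forall o, o < s -> x o = nth 0 w o)) 0)).

Lemma local_ruleE x q : X x -> local_rule [seq x (q + o) | o <- iota 0 s.+1] = val (pi (psi x q)).
Proof.
move=> hx; rewrite /local_rule; set P := fun x' : nat -> nat => _.
have nth_window o : o < s -> nth 0 [seq x (q + o) | o <- iota 0 s.+1] o = x (q + o).
  by move=> ho; rewrite (nth_map 0) ?size_iota ?nth_iota //; lia.
have hP : exists x', P x'.
  exists (iter q (@shift nat) x); split=> [|o ho]; first exact: iter_shiftX.
  by rewrite iter_shift nth_window.
have [hx' h'] := epsilon_spec (inhabits (fun _ => 0)) P hP.
by congr (val (pi _)); symmetry; apply: psi_local => // o ho; rewrite add0n h' // nth_window.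
Qed.

Variable M : nat.
Hypothesis boundX : forall x i, X x -> x i <= M.

Lemma window_countsE x m (u : m.-tuple nat) q : is_nu x u ->
  window_counts s u q = [seq x (q + o) | o <- iota 0 s.+1].
Proof. by case=> _ hu; apply: eq_map => o; rewrite hu. Qed.

Lemma coding_Y_image k d (t : d.-tuple nat) : d <= k ->
  coding_set (relabel pi Y) k t <->
  exists2 m, m <= M * r.+1 * k & sliding_image s local_rule (@coding_set X m m) t.
Proof.
move=> hdk; split.
  case=> y [[y0 [hy0 hy]] [s' [hs' [N [hN hsum]]]] [hsort hcnt]].
  have hx := phiY hy0.
  have [hxN hxs] : (forall j, N <= j -> phi y0 j = 0) /\ \sum_(j < N) phi y0 j <= M * r.+1 * k.
    apply: (support_transfer _ (fun q => boundX q hx) hN); last by rewrite hsum.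
    move=> q hq; apply: NNPP => hn; move: hq; rewrite phi_zero ?eqxx // => o ho.
    apply/eqP; rewrite -pi_eq0 -hy; apply/negPn/negP => hne.
    by apply: hn; exists o => //; exact: ltnW.
  have [u hu] := nu_exists hxN.
  exists (\sum_(j < N) phi y0 j) => //; exists u; split => //.
    by exists (phi y0); split => //; exists (\sum_(j < N) phi y0 j); split => //; exists N.
  by move=> q; rewrite -hcnt hy -(psiK hy0 q) -local_ruleE // (window_countsE _ hu).
case=> m _ [u [[x [hx _ hxu]] hsort hcnt]].
have hc j : val (pi (psi x j)) = count_mem j t.
  by rewrite hcnt (window_countsE _ hxu) local_ruleE.
have hnu : is_nu (fun i => val (pi (psi x i))) t by [].
exists (fun i => val (pi (psi x i))); split=> //; first by exists (psi x); split=> //; exact: psiX.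
by exists d; split=> //; exact: ysum_of_nu hnu.
Qed.

Variable S : ANS.
Hypothesis addS : addable S.

Lemma weakly_codable_Y : weakly_codable S X -> weakly_codable S (relabel pi Y).
Proof.
move=> codX k d; case: (leqP d k) => hdk.
  have rec_m m : recognizable S (@sliding_image m d s local_rule (@coding_set X m m)).
    exact (rec_sliding_image addS d s local_rule (codX m m)).
  apply: rec_ext (rec_bigunion addS (M * r.+1 * k) rec_m) => t.
  exact: iff_sym (coding_Y_image t hdk).
apply: rec_ext (rec_not addS (rec_valid addS d)) => t; split=> [[]//|].
by case=> y [_ [s' [hs' hys]] hnu]; have := ysum_nu hnu hys; lia.
Qed.

Lemma coding_dim_Y : finite_coding_dim X -> finite_coding_dim (relabel pi Y).
Proof.
case=> dX hdX; exists (#|B| * s.+1 * dX) => y [y0 [hy0 hy]].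
have [s' [hs' [N [hN hsum]]]] := hdX _ (phiY hy0).
have [hyN hys] : (forall j, N <= j -> y j = 0) /\ \sum_(j < N) y j <= #|B| * s.+1 * dX.
  apply: (support_transfer _ _ hN); last by rewrite hsum.
    move=> q hq; apply: NNPP => hn; move: hq.
    rewrite hy pi_eq0 -(psiK hy0 q) psi_zero ?eqxx //; first exact: phiY.
    move=> o ho.
    by apply/eqP; apply/negPn/negP => hne; apply: hn; exists o => //; exact: ltnW.
  by move=> q; rewrite hy; exact: ltnW (ltn_ord _).
by exists (\sum_(j < N) y j); split=> //; exists N.
Qed.

End Conjugacy.

Theorem mainTheorem16 (S : ANS) (X : (nat -> nat) -> Prop)
  (B : finType) (Y : (nat -> B) -> Prop) (phi : (nat -> B) -> (nat -> nat)) (b : B) :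
  addable S ->
  subshift X ->
  (exists A : seq nat, 0 \in A /\ forall x, X x -> forall i, x i \in A) ->
  subshift Y ->
  conjugacy Y X phi ->
  Y (fun _ => b) ->
  phi (fun _ => b) =1 (fun _ => 0) ->
  (weakly_codable S X ->
     forall pi : B -> 'I_#|B|, bijective pi -> val (pi b) = 0 ->
       weakly_codable S (relabel pi Y)) /\
  (codable S X ->
     forall pi : B -> 'I_#|B|, bijective pi -> val (pi b) = 0 ->
       codable S (relabel pi Y)).
Proof.
move=> addS [closedX shiftX] [A [_ alphX]] [closedY shiftY]
  [phiY phi_shift contphi [psi [psiX psiK phiK contpsi]]] Yb phib.
have [s psi_window] := uniform_window closedX alphX contpsi.
have alphY (y : nat -> B) : Y y -> forall i, y i \in enum B by move=> _ i; rewrite mem_enum.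
have [r phi_window] := uniform_window closedY alphY contphi.
have boundX x i : X x -> x i <= foldr maxn 0 A by move=> hx; exact/leq_foldr_max/alphX.
have weakY pi : injective pi -> val (pi b) = 0 -> weakly_codable S X ->
    weakly_codable S (relabel pi Y).
  by move=> pi_inj pi_b; exact: (weakly_codable_Y shiftX shiftY Yb phib phiY phi_shift
    psiX psiK phiK contpsi psi_window phi_window pi_inj pi_b boundX addS).
have dimY pi : injective pi -> val (pi b) = 0 -> finite_coding_dim X ->
    finite_coding_dim (relabel pi Y).
  by move=> pi_inj pi_b; exact: (coding_dim_Y closedX shiftX shiftY Yb phib phiY phi_shift
    psiX psiK phiK contpsi psi_window pi_inj pi_b).
split=> [codX | [codX dimX]] pi /bij_inj pi_inj pi_b; first exact: weakY.
by split; [exact: weakY | exact: dimY].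
Qed.
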